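(* Let $\mathcal{X}$ be a finite set, $\pi$ a probability mass function on $\mathcal{X}$ with full support, and $P$ an ergodic $\pi$-reversible transition matrix. Let a group $\mathcal{G}$ act on $\mathcal{X}$ and let $G$ and $M$ be the Gibbs and Metropolis–Hastings orbit kernels for this same action, and $\theta:=\|M-G\|_{\ell^2_0(\pi)\to\ell^2_0(\pi)}$. Then for every positive integer $k$, $0\le\rho(M^kPM^k)-\rho(GPG)\le\rho(P)(2\theta^k+\theta^{2k})$. In particular, if $\theta<1$, then $\lim_{k\to\infty}\big(\rho(M^kPM^k)-\rho(GPG)\big)=0$.
   Context: $\langle f,g\rangle_\pi=\sum_x f(x)g(x)\pi(x)$, $\ell^2_0(\pi)=\{f:\sum_xf(x)\pi(x)=0\}$, operator norms with respect to $\|\cdot\|_\pi$. With $\mathcal{O}(x)$ the orbit of $x$: $G(x,y)=\pi(y)/\pi(\mathcal{O}(x))$ for $y\in\mathcal{O}(x)$, else $0$; $M(x,y)=\frac{1}{|\mathcal{O}(x)|-1}\min\{1,\pi(y)/\pi(x)\}$ for $y\in\mathcal{O}(x)\setminus\{x\}$, $0$ off the orbit, $M(x,x)=1-\sum_{y\ne x}M(x,y)$. For a $\pi$-self-adjoint kernel $K$, $\rho(K)=\sup_{0\ne f\in\ell^2_0(\pi)}|\langle f,Kf\rangle_\pi|/\langle f,f\rangle_\pi$. *)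

From HB Require Import structures.
From mathcomp Require Import all_boot all_order all_algebra all_fingroup.
From mathcomp Require Import all_classical all_reals all_analysis.
Set Implicit Arguments. Unset Strict Implicit. Unset Printing Implicit Defensive.
Import Order.TTheory GRing.Theory Num.Theory.
Local Open Scope ring_scope.
Local Open Scope classical_set_scope.

Section Kernels.
Variables (R : realType) (X : finType).

Definition kmul (K L : X -> X -> R) : X -> X -> R :=
  fun x y => \sum_(z : X) K x z * L z y.
Definition kid : X -> X -> R := fun x y => if x == y then 1 else 0.
Fixpoint kpow (K : X -> X -> R) (n : nat) : X -> X -> R :=
  match n with O => kid | S m => kmul K (kpow K m) end.
Definition kapp (K : X -> X -> R) (f : X -> R) : X -> R :=
  fun x => \sum_(y : X) K x y * f y.
Definition ksub (K L : X -> X -> R) : X -> X -> R := fun x y => K x y - L x y.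

Variable pi : X -> R.

Definition ip (f g : X -> R) : R := \sum_(x : X) f x * g x * pi x.
Definition in_l20 (f : X -> R) : Prop := \sum_(x : X) f x * pi x = 0.

Definition rho (K : X -> X -> R) : R :=
  sup [set r : R | exists f : X -> R,
        [/\ in_l20 f, f <> (fun _ => 0) & r = `|ip f (kapp K f)| / ip f f]].

Definition opnorm_l20 (K : X -> X -> R) : R :=
  sup [set r : R | exists f : X -> R,
        [/\ in_l20 f, f <> (fun _ => 0) &
            r = Num.sqrt (ip (kapp K f) (kapp K f)) / Num.sqrt (ip f f)]].

Definition is_pmf_full_support : Prop :=
  (forall x, 0 < pi x) /\ \sum_(x : X) pi x = 1.

Definition stochastic (P : X -> X -> R) : Prop :=
  (forall x y, 0 <= P x y) /\ (forall x, \sum_(y : X) P x y = 1).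

Definition reversible (P : X -> X -> R) : Prop :=
  forall x y, pi x * P x y = pi y * P y x.

Definition irreducible (P : X -> X -> R) : Prop :=
  forall x y, exists n : nat, 0 < kpow P n x y.

(* period of every state is 1: the only d >= 1 dividing every return time
   n >= 1 (with P^n(x,x) > 0) is d = 1, i.e. gcd of return times is 1 *)
Definition aperiodic (P : X -> X -> R) : Prop :=
  forall x (d : nat), (0 < d)%N ->
    (forall n : nat, (0 < n)%N -> 0 < kpow P n x x -> (d %| n)%N) -> d = 1%N.

Definition ergodic (P : X -> X -> R) : Prop := irreducible P /\ aperiodic P.

Variables (gT : finGroupType) (A : {group gT}) (to : {action gT &-> X}).

Definition orb (x : X) : {set X} := orbit to A x.

Definition gibbsK : X -> X -> R := fun x y =>
  if y \in orb x then pi y / (\sum_(z in orb x) pi z) else 0.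

Definition mhK_off (x y : X) : R :=
  if (y \in orb x) && (y != x) then
    (#|orb x|%:R - 1)^-1 * Num.min 1 (pi y / pi x)
  else 0.

Definition mhK : X -> X -> R := fun x y =>
  if y == x then 1 - \sum_(z : X | z != x) mhK_off x z else mhK_off x y.

End Kernels.

From HB Require Import structures.
From mathcomp Require Import all_boot all_order all_algebra all_fingroup.
From mathcomp Require Import all_classical all_reals all_analysis.
From mathcomp Require Import ring lra.
Import Order.TTheory GRing.Theory Num.Theory numFieldNormedType.Exports.
Set Implicit Arguments. Unset Strict Implicit. Unset Printing Implicit Defensive.
Local Open Scope ring_scope.
Local Open Scope classical_set_scope.

(* Let [G] and [M] act on [l^2_0(pi)]; both are self-adjoint, [G] is the orthogonal
   projection onto orbit-constant functions, and [M] fixes those functions, so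
   [M G = G M = G]. Consequently [M^k - G = (M - G)^k (I - G)] and
   [|M^k f - G f| <= theta^k |f|]. Writing [M^k f = G f + d], the quadratic form
   [<f, M^k P M^k f> = <G f + d, P (G f + d)>] differs from [<f, G P G f>] by at most
   [rho(P) (2 |G f| |d| + |d|^2) <= rho(P) (2 theta^k + theta^(2k)) |f|^2], using
   [|<u, P v>| <= rho(P) |u| |v|] (polarization). Conversely [M^k] fixes [G f], so
   [<f, G P G f> = <G f, M^k P M^k G f>] with [|G f| <= |f|], whence
   [rho(G P G) <= rho(M^k P M^k)]. *)

Section KernelAction.
Variables (R : realType) (X : finType).
Implicit Types (K L : X -> X -> R) (f g : X -> R).

Lemma kapp_kmul K L f : kapp (kmul K L) f = kapp K (kapp L f).
Proof.
apply: funext => x; rewrite /kapp /kmul.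
under eq_bigr do rewrite mulr_suml.
rewrite exchange_big /=; apply: eq_bigr => z _.
by rewrite mulr_sumr; apply: eq_bigr => y _; rewrite mulrA.
Qed.

Lemma kapp_kid f : kapp (@kid R X) f = f.
Proof.
apply: funext => x; rewrite /kapp /kid (bigD1 x) //= eqxx mul1r big1 ?addr0 //.
by move=> y /negbTE; rewrite eq_sym => ->; rewrite mul0r.
Qed.

Lemma kapp_kpow K n f : kapp (kpow K n) f = iter n (kapp K) f.
Proof. by elim: n => [|n IH] /=; rewrite ?kapp_kid // kapp_kmul IH. Qed.

Lemma kapp_ksub K L f : kapp (ksub K L) f = (fun x => kapp K f x - kapp L f x).
Proof.
apply: funext => x; rewrite /kapp /ksub -sumrB.
by apply: eq_bigr => y _; rewrite mulrBl.
Qed.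

Lemma kappD K f g : kapp K (fun x => f x + g x) = (fun x => kapp K f x + kapp K g x).
Proof.
apply: funext => x; rewrite /kapp -big_split.
by apply: eq_bigr => y _; rewrite mulrDr.
Qed.

Lemma kappB K f g : kapp K (fun x => f x - g x) = (fun x => kapp K f x - kapp K g x).
Proof.
apply: funext => x; rewrite /kapp -sumrB.
by apply: eq_bigr => y _; rewrite mulrBr.
Qed.

Lemma kappZ K a f : kapp K (fun x => a * f x) = (fun x => a * kapp K f x).
Proof.
apply: funext => x; rewrite /kapp mulr_sumr.
by apply: eq_bigr => y _; rewrite mulrCA.
Qed.

Lemma kapp0 K : kapp K (fun _ => 0) = (fun _ => 0).
Proof. by apply: funext => x; rewrite /kapp big1 // => y _; rewrite mulr0. Qed.

Lemma kapp_cst1 K : (forall x, \sum_y K x y = 1) -> kapp K (fun _ => 1) = (fun _ => 1).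
Proof. by move=> K1; apply: funext => x; rewrite /kapp; under eq_bigr do rewrite mulr1. Qed.

End KernelAction.

Section SupNonneg.
Variable R : realType.
Implicit Types (E : set R) (B : R).

Lemma sup_ge0 E : (forall r, E r -> 0 <= r) -> 0 <= sup E.
Proof.
move=> E_ge0; have [[[r Er] ubE]|/sup_out-> //] := pselect (has_sup E).
exact: le_trans (E_ge0 r Er) (ub_le_sup ubE Er).
Qed.

Lemma ge_sup_nonneg E B : 0 <= B -> ubound E B -> sup E <= B.
Proof.
move=> B_ge0 ubE; have [->|/set0P E0] := eqVneq E set0; first by rewrite sup0.
exact: ge_sup.
Qed.

End SupNonneg.

Section L2pi.
Variables (R : realType) (X : finType) (pi : X -> R).
Hypothesis pi_gt0 : forall x, 0 < pi x.
Implicit Types (K : X -> X -> R) (f g h u v : X -> R).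

Local Notation ip := (ip pi).
Local Notation in_l20 := (in_l20 pi).
Local Notation rho := (rho pi).
Local Notation opnorm := (opnorm_l20 pi).

Definition selfadjoint K := forall f g, ip f (kapp K g) = ip (kapp K f) g.
Definition l2norm f := Num.sqrt (ip f f).

Lemma ipC f g : ip f g = ip g f.
Proof. by apply: eq_bigr => x _; rewrite (mulrC (f x)). Qed.

Lemma ipDl f g h : ip (fun x => f x + g x) h = ip f h + ip g h.
Proof. by rewrite /ip -big_split; apply: eq_bigr => x _ /=; rewrite !mulrDl. Qed.

Lemma ipBl f g h : ip (fun x => f x - g x) h = ip f h - ip g h.
Proof. by rewrite /ip -sumrB; apply: eq_bigr => x _ /=; rewrite !mulrBl. Qed.

Lemma ipZl a f h : ip (fun x => a * f x) h = a * ip f h.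
Proof. by rewrite /ip mulr_sumr; apply: eq_bigr => x _ /=; rewrite !mulrA. Qed.

Lemma ipDr f g h : ip h (fun x => f x + g x) = ip h f + ip h g.
Proof. by rewrite ipC ipDl ipC (ipC g). Qed.

Lemma ipBr f g h : ip h (fun x => f x - g x) = ip h f - ip h g.
Proof. by rewrite ipC ipBl ipC (ipC g). Qed.

Lemma ipZr a f h : ip h (fun x => a * f x) = a * ip h f.
Proof. by rewrite ipC ipZl ipC. Qed.

Lemma ip0l h : ip (fun _ => 0) h = 0.
Proof. by rewrite /ip big1 // => x _; rewrite !mul0r. Qed.

Lemma ip0r h : ip h (fun _ => 0) = 0.
Proof. by rewrite ipC ip0l. Qed.

Lemma ip_ge0 f : 0 <= ip f f.
Proof. by rewrite sumr_ge0 // => x _; rewrite mulr_ge0 ?sqr_ge0 ?ltW. Qed.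

Lemma ip_eq0 f : ip f f = 0 -> f = (fun _ => 0).
Proof.
move=> /psumr_eq0P ff0; apply: funext => x; apply/eqP.
have /eqP := ff0 (fun y _ => mulr_ge0 (sqr_ge0 (f y)) (ltW (pi_gt0 y))) x isT.
by rewrite mulf_eq0 (gt_eqF (pi_gt0 x)) orbF mulf_eq0 orbb.
Qed.

Lemma ip_gt0 f : f <> (fun _ => 0) -> 0 < ip f f.
Proof. by move=> nf; rewrite lt_def ip_ge0 andbT; apply/eqP => /ip_eq0. Qed.

Lemma ip_injr f1 f2 : (forall g, ip g f1 = ip g f2) -> f1 = f2.
Proof.
move=> eq_ip; set d := fun x => f1 x - f2 x.
have /ip_eq0 d0 : ip d d = 0 by rewrite {2}/d ipBr eq_ip subrr.
by apply: funext => x; apply/eqP; rewrite -subr_eq0 -/(d x) d0.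
Qed.

Lemma l2norm_ge0 f : 0 <= l2norm f.
Proof. exact: sqrtr_ge0. Qed.

Lemma l2norm_sqr f : l2norm f ^+ 2 = ip f f.
Proof. by rewrite sqr_sqrtr // ip_ge0. Qed.

Lemma l2norm_gt0 f : f <> (fun _ => 0) -> 0 < l2norm f.
Proof. by move=> nf; rewrite sqrtr_gt0 ip_gt0. Qed.

Lemma in_l20E f : in_l20 f <-> ip f (fun _ => 1) = 0.
Proof. by rewrite /in_l20 /ip; under [X in _ = 0 <-> X = 0]eq_bigr do rewrite mulr1. Qed.

Lemma l20D f g : in_l20 f -> in_l20 g -> in_l20 (fun x => f x + g x).
Proof. by move=> /in_l20E f0 /in_l20E g0; apply/in_l20E; rewrite ipDl f0 g0 addr0. Qed.

Lemma l20B f g : in_l20 f -> in_l20 g -> in_l20 (fun x => f x - g x).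
Proof. by move=> /in_l20E f0 /in_l20E g0; apply/in_l20E; rewrite ipBl f0 g0 subr0. Qed.

Lemma l20Z a f : in_l20 f -> in_l20 (fun x => a * f x).
Proof. by move=> /in_l20E f0; apply/in_l20E; rewrite ipZl f0 mulr0. Qed.

Lemma reversible_selfadjoint K : reversible pi K -> selfadjoint K.
Proof.
move=> revK f g; rewrite /ip /kapp.
transitivity (\sum_x \sum_y f x * g y * (pi x * K x y)).
  apply: eq_bigr => x _; rewrite mulr_sumr mulr_suml.
  by apply: eq_bigr => y _; ring.
rewrite exchange_big /=; apply: eq_bigr => y _.
rewrite !mulr_suml; apply: eq_bigr => x _; rewrite revK; ring.
Qed.

Lemma l20_kapp K f : selfadjoint K -> (forall x, \sum_y K x y = 1) ->
  in_l20 f -> in_l20 (kapp K f).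
Proof. by move=> saK K1 /in_l20E f0; apply/in_l20E; rewrite -saK kapp_cst1. Qed.

(* Point evaluations are bounded on the finite space: [f x ^+ 2 <= <f, f> / pi x].
   Hence the sets whose suprema define [rho] and [opnorm_l20] are bounded above. *)
Let inv_pi_sum := \sum_z (pi z)^-1.

Lemma sqr_le_ip f x : f x ^+ 2 <= ip f f * inv_pi_sum.
Proof.
have fx_le : f x ^+ 2 * pi x <= ip f f.
  rewrite /ip (bigD1 x) //= expr2 lerDl sumr_ge0 // => y _.
  by rewrite mulr_ge0 ?sqr_ge0 ?ltW.
have pix_le : (pi x)^-1 <= inv_pi_sum.
  by rewrite /inv_pi_sum (bigD1 x) //= lerDl sumr_ge0 // => y _; rewrite invr_ge0 ltW.
rewrite -[f x ^+ 2](mulfK (lt0r_neq0 (pi_gt0 x))).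
apply: ler_pM => //; last by rewrite invr_ge0 ltW.
by rewrite mulr_ge0 ?sqr_ge0 ?ltW.
Qed.

Lemma normM_le_ip f x y : `|f x * f y| <= ip f f * inv_pi_sum.
Proof.
have := sqr_le_ip f x; have := sqr_le_ip f y; have := sqr_ge0 (`|f x| - `|f y|).
by rewrite normrM -(real_normK (num_real (f x))) -(real_normK (num_real (f y))); nra.
Qed.

Lemma quad_form_le (c : X -> X -> R) f :
  `|\sum_x \sum_y c x y * (f x * f y)| <= (\sum_x \sum_y `|c x y|) * inv_pi_sum * ip f f.
Proof.
apply: le_trans (ler_norm_sum _ _ _) _; rewrite !mulr_suml; apply: ler_sum => x _.
apply: le_trans (ler_norm_sum _ _ _) _; rewrite !mulr_suml; apply: ler_sum => y _.
by rewrite normrM -mulrA [inv_pi_sum * _]mulrC ler_wpM2l ?normM_le_ip.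
Qed.

Lemma ip_kapp_quad K f : ip f (kapp K f) = \sum_x \sum_y (K x y * pi x) * (f x * f y).
Proof.
rewrite /ip /kapp; apply: eq_bigr => x _; rewrite mulr_sumr mulr_suml.
by apply: eq_bigr => y _; ring.
Qed.

Lemma ip_kapp2_quad K f : ip (kapp K f) (kapp K f) =
  \sum_y \sum_z (\sum_x K x y * K x z * pi x) * (f y * f z).
Proof.
rewrite /ip /kapp.
transitivity (\sum_x \sum_y \sum_z (K x y * K x z * pi x) * (f y * f z)).
  apply: eq_bigr => x _; rewrite !mulr_suml; apply: eq_bigr => y _.
  by rewrite mulr_sumr mulr_suml; apply: eq_bigr => z _; ring.
rewrite exchange_big; apply: eq_bigr => y _ /=.
by rewrite exchange_big; apply: eq_bigr => z _ /=; rewrite mulr_suml.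
Qed.

Lemma rho_ub K f : in_l20 f -> f <> (fun _ => 0) ->
  `|ip f (kapp K f)| / ip f f <= rho K.
Proof.
move=> lf nf; apply: ub_le_sup; last by exists f.
exists ((\sum_x \sum_y `|K x y * pi x|) * inv_pi_sum) => _ [g [_ ng ->]].
by rewrite ler_pdivrMr ?ip_gt0 // ip_kapp_quad quad_form_le.
Qed.

Lemma opnorm_ub K f : in_l20 f -> f <> (fun _ => 0) ->
  l2norm (kapp K f) / l2norm f <= opnorm K.
Proof.
move=> lf nf; apply: ub_le_sup; last by exists f.
pose C := (\sum_y \sum_z `|\sum_x K x y * K x z * pi x|) * inv_pi_sum.
have C_ge0 : 0 <= C.
  by rewrite mulr_ge0 ?sumr_ge0 // => *; rewrite ?sumr_ge0 // invr_ge0 ltW.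
exists (Num.sqrt C) => _ [g [_ ng ->]].
rewrite ler_pdivrMr ?l2norm_gt0 // -sqrtrM // ler_sqrt; last by rewrite mulr_ge0 ?ip_ge0.
by rewrite ip_kapp2_quad (le_trans (ler_norm _)) ?quad_form_le.
Qed.

Lemma rho_ge0 K : 0 <= rho K.
Proof. by apply: sup_ge0 => _ [f [_ _ ->]]; rewrite divr_ge0 ?ip_ge0. Qed.

Lemma opnorm_ge0 K : 0 <= opnorm K.
Proof. by apply: sup_ge0 => _ [f [_ _ ->]]; rewrite divr_ge0 ?sqrtr_ge0. Qed.

Lemma quad_le_rho K f : in_l20 f -> `|ip f (kapp K f)| <= rho K * ip f f.
Proof.
move=> lf; have [->|nf] := pselect (f = (fun _ => 0)).
  by rewrite ip0l normr0 mulr_ge0 ?rho_ge0 ?ip_ge0.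
by rewrite -ler_pdivrMr ?ip_gt0 ?rho_ub.
Qed.

Lemma rho_le K B : 0 <= B ->
  (forall f, in_l20 f -> `|ip f (kapp K f)| <= B * ip f f) -> rho K <= B.
Proof.
move=> B_ge0 quadB; apply: ge_sup_nonneg => // _ [f [lf nf ->]].
by rewrite ler_pdivrMr ?ip_gt0 ?quadB.
Qed.

Lemma l2norm_kapp_le K f : in_l20 f -> l2norm (kapp K f) <= opnorm K * l2norm f.
Proof.
move=> lf; have [->|nf] := pselect (f = (fun _ => 0)).
  by rewrite kapp0 /l2norm ip0l sqrtr0 mulr0.
by rewrite -ler_pdivrMr ?l2norm_gt0 ?opnorm_ub.
Qed.

Section SelfAdjoint.
Variable K : X -> X -> R.
Hypothesis saK : selfadjoint K.

(* [4 <u, K v> = <u + v, K (u + v)> - <u - v, K (u - v)>] *)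
Lemma ip_kapp_polar u v : in_l20 u -> in_l20 v ->
  2 * `|ip u (kapp K v)| <= rho K * (ip u u + ip v v).
Proof.
move=> lu lv; set a := ip u (kapp K v).
have Kvu : ip v (kapp K u) = a by rewrite saK ipC.
have := quad_le_rho K (l20D lu lv); rewrite kappD !ipDl !ipDr.
have := quad_le_rho K (l20B lu lv); rewrite kappB !ipBl !ipBr.
rewrite Kvu -/a (ipC v u) !ler_norml => /andP[h1 h2] /andP[h3 h4].
have r0 := rho_ge0 K.
by case: (lerP 0 a) => a0; [rewrite ger0_norm | rewrite ltr0_norm]; lra.
Qed.

Lemma ip_kapp_le u v : in_l20 u -> in_l20 v ->
  `|ip u (kapp K v)| <= rho K * l2norm u * l2norm v.
Proof.
move=> lu lv; have r0 := rho_ge0 K.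
have [->|nu] := pselect (u = (fun _ => 0)).
  by rewrite ip0l normr0 !mulr_ge0 ?l2norm_ge0.
have [->|nv] := pselect (v = (fun _ => 0)).
  by rewrite kapp0 ip0r normr0 !mulr_ge0 ?l2norm_ge0.
have nu0 := l2norm_gt0 nu; have nv0 := l2norm_gt0 nv.
have inv_sqrK (c : R) : 0 < c -> c^-1 * (c^-1 * c ^+ 2) = 1.
  by move=> c0; field; rewrite gt_eqF.
(* polarization for the unit vectors [u / |u|] and [v / |v|] *)
have := ip_kapp_polar (l20Z (l2norm u)^-1 lu) (l20Z (l2norm v)^-1 lv).
rewrite kappZ !ipZl !ipZr -!l2norm_sqr !inv_sqrK //.
rewrite !normrM ![`|_^-1|]gtr0_norm ?invr_gt0 // => H.
by rewrite -mulrA -ler_pdivrMr ?mulr_gt0 // invfM; lra.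
Qed.

Lemma quad_perturb_le g d : in_l20 g -> in_l20 d ->
  `|ip (fun x => g x + d x) (kapp K (fun x => g x + d x))| <=
  `|ip g (kapp K g)| + rho K * (2 * (l2norm g * l2norm d) + l2norm d ^+ 2).
Proof.
move=> lg ld; rewrite kappD !ipDl !ipDr [ip d (kapp K g)]saK (ipC (kapp K d)).
have cross := ip_kapp_le lg ld; have dd := quad_le_rho K ld.
set A := ip g _; set c := ip g (kapp K d); set D := ip d _.
have -> : A + c + (c + D) = A + (2 * c + D) by ring.
apply: le_trans (ler_normD _ _) _; rewrite lerD2l mulrDr.
apply: le_trans (ler_normD _ _) _; apply: lerD; last by rewrite l2norm_sqr.
by rewrite normrM normr_nat; lra.
Qed.

End SelfAdjoint.

End L2pi.

Section OrbitProjection.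
Variables (R : realType) (X : finType) (pi : X -> R).
Hypothesis pi_gt0 : forall x, 0 < pi x.
Variables G M : X -> X -> R.
Hypotheses (saG : selfadjoint pi G) (saM : selfadjoint pi M).
Hypotheses (G_row1 : forall x, \sum_y G x y = 1) (M_row1 : forall x, \sum_y M x y = 1).
Hypothesis GG : forall f, kapp G (kapp G f) = kapp G f.
Hypothesis MG : forall f, kapp M (kapp G f) = kapp G f.
Implicit Types (f g : X -> R).

Local Notation ip := (ip pi).
Local Notation in_l20 := (in_l20 pi).
Local Notation l2norm := (l2norm pi).
Local Notation Mk k := (iter k (kapp M)).
Local Notation theta := (opnorm_l20 pi (ksub M G)).

Lemma GM f : kapp G (kapp M f) = kapp G f.
Proof. by apply: (ip_injr pi_gt0) => g; rewrite saG saM MG -saG. Qed.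

Lemma iterM_G k f : Mk k (kapp G f) = kapp G f.
Proof. by elim: k => [//|k IH]; rewrite iterS IH MG. Qed.

Lemma G_iterM k f : kapp G (Mk k f) = kapp G f.
Proof. by elim: k => [//|k IH]; rewrite iterS GM IH. Qed.

Lemma selfadjoint_iterM k f g : ip f (Mk k g) = ip (Mk k f) g.
Proof. by elim: k f => [//|k IH] f; rewrite iterS saM IH -iterSr. Qed.

Lemma l20_iterM k f : in_l20 f -> in_l20 (Mk k f).
Proof. by move=> lf; elim: k => [//|k IH]; rewrite iterS; apply: l20_kapp. Qed.

(* As [M G = G M = G G = G], [M - G] maps [M^k f - G f] to [M^(k+1) f - G f]. *)
Lemma iterM_subG k f : (fun x => Mk k f x - kapp G f x) =
  iter k (kapp (ksub M G)) (fun x => f x - kapp G f x).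
Proof.
elim: k => [//|k IH]; rewrite [in RHS]iterS -IH kapp_ksub !kappB G_iterM GG MG.
by apply: funext => x; rewrite iterS subrr subr0.
Qed.

Lemma ip_G_pythagoras f :
  ip f f = ip (kapp G f) (kapp G f) + ip (fun x => f x - kapp G f x) (fun x => f x - kapp G f x).
Proof.
have GfG : ip (kapp G f) (kapp G f) = ip f (kapp G f) by rewrite -saG GG.
by rewrite !ipBl !ipBr GfG (ipC pi (kapp G f) f); ring.
Qed.

Lemma ip_G_le f : ip (kapp G f) (kapp G f) <= ip f f.
Proof. by rewrite (ip_G_pythagoras f) lerDl ip_ge0. Qed.

Lemma l2norm_G_le f : l2norm (kapp G f) <= l2norm f.
Proof. by rewrite ler_sqrt ?ip_ge0 ?ip_G_le. Qed.

Lemma l2norm_subG_le f : l2norm (fun x => f x - kapp G f x) <= l2norm f.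
Proof. by rewrite ler_sqrt ?ip_ge0 // (ip_G_pythagoras f) lerDr ip_ge0. Qed.

Lemma l2norm_iterM_subG_le k f : in_l20 f ->
  l2norm (fun x => Mk k f x - kapp G f x) <= theta ^+ k * l2norm f.
Proof.
move=> lf; elim: k => [|k IH]; first by rewrite mul1r l2norm_subG_le.
have l_k : in_l20 (fun x => Mk k f x - kapp G f x).
  by apply: l20B; [exact: l20_iterM | exact: l20_kapp].
rewrite iterM_subG iterS -iterM_subG exprS -mulrA.
apply: le_trans (l2norm_kapp_le pi_gt0 _ l_k) _.
by rewrite ler_wpM2l ?opnorm_ge0.
Qed.

Variable P : X -> X -> R.
Hypothesis saP : selfadjoint pi P.

Local Notation rho := (rho pi).
Local Notation GPG := (kmul (kmul G P) G).
Local Notation MPM k := (kmul (kmul (kpow M k) P) (kpow M k)).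

Lemma kapp_GPG f : kapp GPG f = kapp G (kapp P (kapp G f)).
Proof. by rewrite !kapp_kmul. Qed.

Lemma kapp_MPM k f : kapp (MPM k) f = Mk k (kapp P (Mk k f)).
Proof. by rewrite !kapp_kmul !kapp_kpow. Qed.

(* [G f] is fixed by [M^k], so on it [M^k P M^k] and [G P G] agree. *)
Lemma rho_GPG_le k : rho GPG <= rho (MPM k).
Proof.
apply: (rho_le pi_gt0) => [|f lf]; first exact: rho_ge0.
have lGf : in_l20 (kapp G f) by apply: l20_kapp.
have -> : ip f (kapp GPG f) = ip (kapp G f) (kapp (MPM k) (kapp G f)).
  by rewrite kapp_MPM iterM_G selfadjoint_iterM iterM_G kapp_GPG saG.
apply: le_trans (quad_le_rho pi_gt0 _ lGf) _.
by rewrite ler_wpM2l ?(rho_ge0 pi_gt0) ?ip_G_le.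
Qed.

Lemma rho_MPM_le k :
  rho (MPM k) <= rho GPG + rho P * (2 * theta ^+ k + theta ^+ (2 * k)).
Proof.
have rP0 := rho_ge0 pi_gt0 P; have t0 := opnorm_ge0 pi (ksub M G).
apply: (rho_le pi_gt0) => [|f lf].
  by rewrite addr_ge0 ?rho_ge0 ?mulr_ge0 ?addr_ge0 ?mulr_ge0 ?exprn_ge0.
set d := fun x => Mk k f x - kapp G f x.
have lGf : in_l20 (kapp G f) by apply: l20_kapp.
have ld : in_l20 d by apply: l20B; [exact: l20_iterM | exact: l20_kapp].
have -> : ip f (kapp (MPM k) f) =
    ip (fun x => kapp G f x + d x) (kapp P (fun x => kapp G f x + d x)).
  rewrite kapp_MPM selfadjoint_iterM; congr (ip _ (kapp P _));
  by apply: funext => x; rewrite /d addrC subrK.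
apply: le_trans (quad_perturb_le pi_gt0 saP lGf ld) _.
have hG := quad_le_rho pi_gt0 GPG lf; rewrite kapp_GPG saG in hG.
have nG := l2norm_G_le f; have nd : l2norm d <= theta ^+ k * l2norm f.
  exact: l2norm_iterM_subG_le.
have nG0 := l2norm_ge0 pi (kapp G f); have nd0 := l2norm_ge0 pi d.
have h1 : l2norm (kapp G f) * l2norm d <= theta ^+ k * ip f f.
  by rewrite -(l2norm_sqr pi_gt0) expr2 mulrCA ler_pM.
have h2 : l2norm d ^+ 2 <= theta ^+ (2 * k) * ip f f.
  by rewrite -(l2norm_sqr pi_gt0) mulnC exprM -exprMn !expr2 ler_pM.
have := ler_wpM2l rP0 (lerD (ler_wpM2l (ler0n R 2) h1) h2).
lra.
Qed.

End OrbitProjection.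

Section OrbitKernels.
Variables (R : realType) (X : finType) (pi : X -> R).
Hypothesis pi_gt0 : forall x, 0 < pi x.
Variables (gT : finGroupType) (A : {group gT}) (to : {action gT &-> X}).

Local Notation O x := (orb A to x).
Local Notation G := (gibbsK pi A to).
Local Notation M := (mhK pi A to).

Lemma orb_refl x : x \in O x.
Proof. exact: orbit_refl. Qed.

Lemma orb_sym x y : (y \in O x) = (x \in O y).
Proof. exact: orbit_sym. Qed.

Lemma orb_eq x y : y \in O x -> O y = O x.
Proof. by move/orbit_eqP. Qed.

Lemma orb_mass_gt0 x : 0 < \sum_(z in O x) pi z.
Proof.
rewrite (bigD1 x) ?orb_refl //= ltr_pwDl // sumr_ge0 // => z _.
exact: ltW.
Qed.

Lemma gibbsK_reversible : reversible pi G.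
Proof.
move=> x y; rewrite /gibbsK -orb_sym.
case: (boolP (x \in O y)) => [yx|_]; last by rewrite !mulr0.
by rewrite (orb_eq yx) mulrCA.
Qed.

Lemma gibbsK_row1 x : \sum_y G x y = 1.
Proof.
by rewrite /gibbsK -big_mkcond /= -mulr_suml divff // gt_eqF // orb_mass_gt0.
Qed.

Lemma gibbsK_out x y : y \notin O x -> G x y = 0.
Proof. by rewrite /gibbsK => /negbTE ->. Qed.

Lemma mhK_out x y : y \notin O x -> M x y = 0.
Proof.
move=> yx; have nyx : y != x by apply: contraNneq yx => ->; exact: orb_refl.
by rewrite /mhK (negbTE nyx) /mhK_off (negbTE yx).
Qed.

Lemma mhK_row1 x : \sum_y M x y = 1.
Proof.
rewrite (bigD1 x) //= {1}/mhK eqxx.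
rewrite (eq_bigr (mhK_off pi A to x)) ?subrK // => y /negbTE nyx.
by rewrite /mhK nyx.
Qed.

(* [pi x * min 1 (pi y / pi x) = min (pi x) (pi y)] is symmetric in [x, y]. *)
Lemma mhK_reversible : reversible pi M.
Proof.
move=> x y; have [->//|nyx] := eqVneq y x.
have nxy : x != y by rewrite eq_sym.
rewrite /mhK (negbTE nyx) (negbTE nxy) /mhK_off nyx nxy !andbT [x \in O y]orb_sym.
case: (boolP (y \in O x)) => [yx|_]; last by rewrite !mulr0.
have min_pi (c a b : R) : 0 < a -> a * (c * Num.min 1 (b / a)) = c * Num.min a b.
  by move=> a0; rewrite mulrCA minr_pMr ?ltW // mulr1 [a * _]mulrC divfK // gt_eqF.
by rewrite (orb_eq yx) !min_pi // minC.
Qed.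

Lemma kapp_gibbsK_orb f x y : y \in O x -> kapp G f y = kapp G f x.
Proof. by move=> yx; rewrite /kapp /gibbsK (orb_eq yx). Qed.

(* [G f] is constant on orbits, so an orbit-supported stochastic kernel fixes it. *)
Lemma kapp_orb_supported_gibbsK K f :
  (forall x y, y \notin O x -> K x y = 0) -> (forall x, \sum_y K x y = 1) ->
  kapp K (kapp G f) = kapp G f.
Proof.
move=> K_out K_row1; apply: funext => x; rewrite {1}/kapp.
rewrite (eq_bigr (fun y => K x y * kapp G f x)) -?mulr_suml ?K_row1 ?mul1r // => y _.
by case: (boolP (y \in O x)) => [/kapp_gibbsK_orb->//|/K_out->]; rewrite !mul0r.
Qed.

End OrbitKernels.

Lemma geometric_bound_cvg0 (R : realType) (c t : R) : 0 <= t < 1 ->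
  (fun k : nat => c * (2 * t ^+ k + t ^+ (2 * k))) @ \oo --> (0 : R).
Proof.
move=> /andP[t0 t1].
have geo (q : R) : 0 <= q < 1 -> (fun k : nat => q ^+ k) @ \oo --> (0 : R).
  by case/andP => q0 q1; apply: cvg_expr; rewrite ger0_norm.
have -> : (0 : R) = c * (2 * 0 + 0) by rewrite mulr0 addr0 mulr0.
apply: cvgMl_tmp; apply: cvgD; first by apply: cvgMl_tmp; apply: geo; apply/andP.
have -> : (fun k : nat => t ^+ (2 * k)) = (fun k => (t ^+ 2) ^+ k).
  by apply: funext => k; rewrite exprM.
by apply: geo; rewrite exprn_ge0 //= expr_lt1.
Qed.

Unset Implicit Arguments.

Theorem proposition3p7 (R : realType) (X : finType) (pi : X -> R)
  (P : X -> X -> R) (gT : finGroupType) (A : {group gT})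
  (to : {action gT &-> X}) :
  is_pmf_full_support pi ->
  stochastic P -> reversible pi P -> ergodic P ->
  let G := gibbsK pi A to in
  let M := mhK pi A to in
  let theta := opnorm_l20 pi (ksub M G) in
  (forall k : nat, (0 < k)%N ->
     0 <= rho pi (kmul (kmul (kpow M k) P) (kpow M k)) - rho pi (kmul (kmul G P) G)
     /\ rho pi (kmul (kmul (kpow M k) P) (kpow M k)) - rho pi (kmul (kmul G P) G)
        <= rho pi P * (2 * theta ^+ k + theta ^+ (2 * k))) /\
  (theta < 1 ->
     (fun k : nat => rho pi (kmul (kmul (kpow M k) P) (kpow M k))
                     - rho pi (kmul (kmul G P) G)) @ \oo --> (0 : R)).
Proof.
move=> [pi_gt0 _] _ /reversible_selfadjoint saP _ G M theta.
have saG := reversible_selfadjoint (gibbsK_reversible pi A to).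
have saM := reversible_selfadjoint (mhK_reversible pi_gt0 A to).
have G_row1 := gibbsK_row1 pi_gt0 A to; have M_row1 := mhK_row1 pi A to.
have GG f : kapp G (kapp G f) = kapp G f.
  exact: kapp_orb_supported_gibbsK (@gibbsK_out _ _ pi _ A to) G_row1.
have MG f : kapp M (kapp G f) = kapp G f.
  exact: kapp_orb_supported_gibbsK (@mhK_out _ _ pi _ A to) M_row1.
have bounds k :
     0 <= rho pi (kmul (kmul (kpow M k) P) (kpow M k)) - rho pi (kmul (kmul G P) G)
  /\ rho pi (kmul (kmul (kpow M k) P) (kpow M k)) - rho pi (kmul (kmul G P) G)
     <= rho pi P * (2 * theta ^+ k + theta ^+ (2 * k)).
  split; first by rewrite subr_ge0 (rho_GPG_le pi_gt0 saG saM G_row1 GG MG P).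
  by rewrite lerBlDl (rho_MPM_le pi_gt0 saG saM G_row1 M_row1 GG MG saP).
split=> [k _|theta_lt1]; first exact: bounds.
apply: (squeeze_cvgr _ (cvg_cst 0) (geometric_bound_cvg0 (rho pi P) _)).
  by apply: nearW => k; apply/andP; exact: bounds.
by rewrite opnorm_ge0.
Qed.
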